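(* Suppose Assumption A(ii) holds and $F$ is strongly $K$-convex with some modulus in $\mathrm{int}(K)$. Let $\{x^k\}$ be an infinite sequence generated by Algorithm 1 with $G_k\in\mathcal{S}_{\ell,\mu}(F,x^k)$ for all $k$, where $\ell\prec_K\mu$. Then: (i) $\{x^k\}$ converges to an efficient solution $x^*$ of $\min_K F(x)$; (ii) $\|x^{k+1}-x^*\|\le\sqrt{\max_{c^*\in C}\frac{\langle c^*,\ell\rangle}{\langle c^*,\mu\rangle}}\,\|x^k-x^*\|$ for all $k\ge0$.
   Context: $K\subset\mathbb{R}^m$ is a closed, convex, pointed cone with nonempty interior; $y\preceq_K y'$ iff $y'-y\in K$, $y\prec_K y'$ iff $y'-y\in\mathrm{int}(K)$. $K^*=\{c:\langle c,y\rangle\ge0\ \forall y\in K\}$; $C$ is a compact convex set with $0\notin C$, $\mathrm{cone}(C)=K^*$. $F:\mathbb{R}^n\to\mathbb{R}^m$ differentiable with Jacobian $JF$. $x^*$ is efficient if there is no $x$ with $F(x)\preceq_K F(x^* )$ and $F(x)\ne F(x^* )$; $K$-stationary if $\mathrm{range}(JF(x^* ))\cap(-\mathrm{int}(K))=\emptyset$. For differentiable $\Phi$: strongly $K$-convex with $\mu\in K$ means $J\Phi(x)(y-x)+\tfrac12\|y-x\|^2\mu\preceq_K\Phi(y)-\Phi(x)$ $\forall x,y$; $K$-smooth with $\ell\in K$ means $\Phi(y)-\Phi(x)\preceq_K J\Phi(x)(y-x)+\tfrac12\|y-x\|^2\ell$ $\forall x,y$. Surrogate class $\mathcal{S}_{\ell,\mu}(F,x^k)$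 ($\ell\in K,\mu\in\mathrm{int}(K)$): differentiable $G_k$ strongly $K$-convex with $\mu$ such that, with $x^{k+1}$ the minimizer of $x\mapsto\max_{c^*\in C}\langle c^*,G_k(x)\rangle$ and $H_k:=G_k-F+F(x^k)$: $F(x^{k+1})-F(x^k)\preceq_K G_k(x^{k+1})$; $H_k$ is $K$-smooth with $\ell$, $H_k(x^k)=0$, $JH_k(x^k)=0$. Algorithm 1: from $x^0$, choose $G_k\in\mathcal{S}_{\ell,\mu}(F,x^k)$, set $x^{k+1}:=\arg\min_x\max_{c^*\in C}\langle c^*,G_k(x)\rangle$, stop if $x^{k+1}=x^k$. Assumption A(ii): whenever $x^k\to x^*$ along an infinite index set $\mathcal{K}$, $G_k\in\mathcal{S}_{\ell,\mu}(F,x^k)$ and $\max_{c^*\in C}\langle c^*,G_k(x^{k+1})\rangle\to0$ along $\mathcal{K}$, $x^*$ is $K$-stationary. *)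

From HB Require Import structures.
From mathcomp Require Import all_boot all_order all_algebra.
From mathcomp Require Import all_classical all_reals all_analysis.

Set Implicit Arguments.
Unset Strict Implicit.
Unset Printing Implicit Defensive.

Import Order.TTheory GRing.Theory Num.Theory.
Import numFieldNormedType.Exports.

Local Open Scope classical_set_scope.
Local Open Scope ring_scope.

Section Defs.
Variable R : realType.

Definition dot {m : nat} (u v : 'rV[R]_m) : R := \sum_(i < m) u ord0 i * v ord0 i.
Definition enorm {m : nat} (u : 'rV[R]_m) : R := Num.sqrt (dot u u).

Definition proper_cone {m : nat} (K : set 'rV[R]_m) : Prop :=
  closed K /\ K 0 /\
  (forall t y, 0 <= t -> K y -> K (t *: y)) /\
  (forall y z, K y -> K z -> K (y + z)) /\
  (forall y, K y -> K (- y) -> y = 0) /\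
  (exists y, interior K y).

Definition dual_cone {m : nat} (K : set 'rV[R]_m) : set 'rV[R]_m :=
  [set c | forall y, K y -> 0 <= dot c y].

Definition convex_set' {m : nat} (C : set 'rV[R]_m) : Prop :=
  forall x y t, C x -> C y -> 0 <= t <= 1 -> C (t *: x + (1 - t) *: y).

Definition cone_of {m : nat} (C : set 'rV[R]_m) : set 'rV[R]_m :=
  [set y | exists t c, [/\ 0 <= t, C c & y = t *: c]].

Definition Kle {m : nat} (K : set 'rV[R]_m) (y y' : 'rV[R]_m) : Prop := K (y' - y).
Definition Klt {m : nat} (K : set 'rV[R]_m) (y y' : 'rV[R]_m) : Prop :=
  interior K (y' - y).

Definition maxC {m : nat} (C : set 'rV[R]_m) (y : 'rV[R]_m) : R :=
  sup [set dot c y | c in C].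

Definition differentiable_all {n m : nat} (Phi : 'rV[R]_n -> 'rV[R]_m) : Prop :=
  forall x, differentiable Phi x.

(* J Phi(x) v is 'd Phi x v (Frechet derivative) *)
Definition strongly_Kconvex {n m : nat} (K : set 'rV[R]_m)
  (Phi : 'rV[R]_n -> 'rV[R]_m) (mu : 'rV[R]_m) : Prop :=
  forall x y, Kle K ('d Phi x (y - x) + (2^-1 * enorm (y - x) ^+ 2) *: mu)
                    (Phi y - Phi x).

Definition Ksmooth {n m : nat} (K : set 'rV[R]_m)
  (Phi : 'rV[R]_n -> 'rV[R]_m) (l : 'rV[R]_m) : Prop :=
  forall x y, Kle K (Phi y - Phi x)
                    ('d Phi x (y - x) + (2^-1 * enorm (y - x) ^+ 2) *: l).

Definition is_argmin_step {n m : nat} (C : set 'rV[R]_m)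
  (G : 'rV[R]_n -> 'rV[R]_m) (z : 'rV[R]_n) : Prop :=
  forall x, maxC C (G z) <= maxC C (G x).

Definition surrogate {n m : nat} (K : set 'rV[R]_m) (C : set 'rV[R]_m)
  (l mu : 'rV[R]_m) (F : 'rV[R]_n -> 'rV[R]_m) (xk : 'rV[R]_n)
  (G : 'rV[R]_n -> 'rV[R]_m) : Prop :=
  let H := fun x => G x - F x + F xk in
  differentiable_all G /\
  strongly_Kconvex K G mu /\
  (forall z, is_argmin_step C G z -> Kle K (F z - F xk) (G z)) /\
  Ksmooth K H l /\
  H xk = 0 /\
  (forall v, 'd H xk v = 0).

(* sequence generated by Algorithm 1 (never stopping) *)
Definition alg1_seq {n m : nat} (K : set 'rV[R]_m) (C : set 'rV[R]_m)
  (l mu : 'rV[R]_m) (F : 'rV[R]_n -> 'rV[R]_m)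
  (x : nat -> 'rV[R]_n) (G : nat -> 'rV[R]_n -> 'rV[R]_m) : Prop :=
  forall k, surrogate K C l mu F (x k) (G k) /\ is_argmin_step C (G k) (x k.+1).

Definition K_stationary {n m : nat} (K : set 'rV[R]_m)
  (F : 'rV[R]_n -> 'rV[R]_m) (xs : 'rV[R]_n) : Prop :=
  forall v, ~ interior K (- 'd F xs v).

Definition efficient {n m : nat} (K : set 'rV[R]_m)
  (F : 'rV[R]_n -> 'rV[R]_m) (xs : 'rV[R]_n) : Prop :=
  forall x, Kle K (F x) (F xs) -> F x = F xs.

(* Assumption A(ii): an infinite index set is the range of a strictly
   increasing map phi : nat -> nat *)
Definition assumption_Aii {n m : nat} (K : set 'rV[R]_m) (C : set 'rV[R]_m)
  (l mu : 'rV[R]_m) (F : 'rV[R]_n -> 'rV[R]_m) : Prop :=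
  forall (x : nat -> 'rV[R]_n) (G : nat -> 'rV[R]_n -> 'rV[R]_m)
         (phi : nat -> nat) (xs : 'rV[R]_n),
    alg1_seq K C l mu F x G ->
    (forall j, (phi j < phi j.+1)%N) ->
    (fun j => x (phi j)) @ \oo --> xs ->
    (fun j => maxC C (G (phi j) (x (phi j).+1))) @ \oo --> (0 : R) ->
    K_stationary K F xs.

End Defs.

From Pilot Require Import Defs.
From HB Require Import structures.
From mathcomp Require Import all_boot all_order all_algebra.
From mathcomp Require Import all_classical all_reals all_analysis.
From mathcomp Require Import ring lra.
Import Order.TTheory GRing.Theory Num.Theory.
Import numFieldNormedType.Exports.
Local Open Scope classical_set_scope.
Local Open Scope ring_scope.
Set Implicit Arguments.
Unset Strict Implicit.

(* Scalarise with c in C, a compact base of the dual cone.  Strong K-convexity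
   of G_k along the segment from x^{k+1} towards a point y with
   <c, F y> <= <c, F x^{k+1}> for all c, the optimality of x^{k+1} and the
   K-smoothness of H_k at x^k give
   ||x^{k+1} - y||^2 <= Q ||x^k - y||^2,  Q = sup_{c in C} <c,l>/<c,mu>,
   and l <_K mu forces Q < 1.  Taking y = x^j (the values <c, F x^k> decrease)
   makes the iterates Cauchy; their limit x* lies below every F x^k, which gives
   the rate, and any y with F y <=_K F x* is also a limit of the iterates, which
   gives efficiency. *)

Section Dot.
Variables (R : realType) (m : nat).
Implicit Types (u v w c y : 'rV[R]_m) (a : R).

Lemma dotC u v : dot u v = dot v u.
Proof. by apply: eq_bigr => i _; rewrite mulrC. Qed.

Lemma dotDr u v w : dot u (v + w) = dot u v + dot u w.
Proof. by rewrite /dot -big_split; apply: eq_bigr => i _; rewrite mxE mulrDr. Qed.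

Lemma dotZr u v a : dot u (a *: v) = a * dot u v.
Proof. by rewrite /dot mulr_sumr; apply: eq_bigr => i _; rewrite mxE mulrCA. Qed.

Lemma dotZl u v a : dot (a *: u) v = a * dot u v.
Proof. by rewrite dotC dotZr dotC. Qed.

Lemma dotNr u v : dot u (- v) = - dot u v.
Proof. by rewrite -scaleN1r dotZr mulN1r. Qed.

Lemma dotBr u v w : dot u (v - w) = dot u v - dot u w.
Proof. by rewrite dotDr dotNr. Qed.

Lemma dot0r u : dot u 0 = 0.
Proof. by rewrite -(scale0r 0) dotZr mul0r. Qed.

Lemma dot0l u : dot 0 u = 0.
Proof. by rewrite dotC dot0r. Qed.

Lemma dot_self_ge0 v : 0 <= dot v v.
Proof. by apply: sumr_ge0 => i _; rewrite -expr2 sqr_ge0. Qed.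

Lemma enorm_sqr v : enorm v ^+ 2 = dot v v.
Proof. by rewrite sqr_sqrtr // dot_self_ge0. Qed.

Lemma enorm_ge0 v : 0 <= enorm v.
Proof. exact: sqrtr_ge0. Qed.

Lemma enormZ a v : enorm (a *: v) = `|a| * enorm v.
Proof. by rewrite /enorm dotZl dotZr mulrA -expr2 sqrtrM ?sqr_ge0 // sqrtr_sqr. Qed.

Lemma enorm_distC u v : enorm (u - v) = enorm (v - u).
Proof. by rewrite -opprB -scaleN1r enormZ normrN1 mul1r. Qed.

(* [`|v|] is the max-norm of the normed module 'rV[R]_m, [enorm v] the
   Euclidean norm. *)
Lemma normr_coord_le v i : `|v ord0 i| <= `|v|.
Proof.
have /mapP[j _ ->] : `|v ord0 i| \in [seq `|v x.1 x.2| | x : 'I_1 * 'I_m].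
  by apply/mapP; exists (ord0, i); rewrite ?mem_enum.
by rewrite [leRHS]/Num.norm /= mx_normrE; apply/bigmax_geP; right; exists j.
Qed.

Lemma normr_le_enorm v : `|v| <= enorm v.
Proof.
rewrite [leLHS]/Num.norm /= mx_normrE; apply: bigmax_le => [|[i j] _ /=].
  exact: enorm_ge0.
rewrite (ord1 i) -sqrtr_sqr ler_sqrt ?dot_self_ge0 // /dot (bigD1 j) //=.
by rewrite -expr2 lerDl sumr_ge0 // => k _; rewrite -expr2 sqr_ge0.
Qed.

Lemma enorm_le_normr v : enorm v <= Num.sqrt m%:R * `|v|.
Proof.
have -> : `|v| = Num.sqrt (`|v| ^+ 2) by rewrite sqrtr_sqr normr_id.
rewrite -sqrtrM // ler_sqrt ?mulr_ge0 ?sqr_ge0 //.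
rewrite /dot mulr_natl -[X in _ *+ X]card_ord -sumr_const; apply: ler_sum => i _.
rewrite -expr2 -real_normK ?num_real //.
by rewrite lerXn2r ?nnegrE ?normr_ge0 // normr_coord_le.
Qed.

Lemma normr_dot_le c y : `|dot c y| <= m%:R * (`|c| * `|y|).
Proof.
apply: le_trans (ler_norm_sum _ _ _) _.
rewrite mulr_natl -[X in _ *+ X]card_ord -sumr_const; apply: ler_sum => i _.
by rewrite normrM ler_pM ?normr_coord_le.
Qed.

Lemma dot_continuous c : continuous (dot c).
Proof.
apply: continuous_big => [|i _ y]; first exact: add_continuous.
apply: (continuousM (x := y) (s := fun=> c ord0 i) (t := fun v => v ord0 i)).
  exact: cst_continuous.
exact: (@coord_continuous R 1 m ord0 i).
Qed.

End Dot.

Section Cones.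
Variables (R : realType) (m : nat).
Implicit Types (K C : set 'rV[R]_m) (c y : 'rV[R]_m).

Lemma Kle_dot K c a b : dual_cone K c -> Kle K a b -> dot c a <= dot c b.
Proof. by move=> Kc /Kc; rewrite dotBr subr_ge0. Qed.

Lemma cone_of_dual_sub K C : cone_of C = dual_cone K -> C `<=` dual_cone K.
Proof. by move=> <- c Cc; exists 1, c; rewrite scale1r. Qed.

Lemma cone_of_dual_neq0 K C : cone_of C = dual_cone K -> C !=set0.
Proof.
move=> coneC; have : dual_cone K 0 by move=> y _; rewrite dot0l.
by rewrite -coneC => -[_ [c [_ Cc _]]]; exists c.
Qed.

Lemma interior_dot_ge_norm K y : interior K y ->
  exists2 e, 0 < e & forall c, dual_cone K c -> e * `|c| <= dot c y.
Proof.
move=> /nbhs_ballP[e e0 yeK]; exists (e / 2) => [|c Kc]; first by rewrite divr_gt0.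
have [->|c0] := eqVneq c 0; first by rewrite normr0 mulr0 dot0l.
have nc : 0 < `|c| by rewrite normr_gt0.
pose s := e / 2 / `|c|.
have s0 : 0 < s by rewrite !divr_gt0.
have : K (y - s *: c).
  apply: yeK; rewrite -ball_normE /= opprB addrC subrK normrZ gtr0_norm //.
  by rewrite /s divfK ?gt_eqF // ltr_pdivrMr // ltr_pMr // ltr1n.
move=> /Kc; rewrite dotBr dotZr subr_ge0; apply: le_trans.
have -> : e / 2 * `|c| = s * `|c| ^+ 2 by rewrite /s expr2 mulrA divfK ?gt_eqF.
rewrite ler_wpM2l ?(ltW s0) //.
rewrite -enorm_sqr lerXn2r ?nnegrE ?normr_ge0 ?enorm_ge0 //.
exact: normr_le_enorm.
Qed.

Lemma closed_norm_ge (V : normedModType R) (A : set V) : closed A -> ~ A 0 ->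
  exists2 r, 0 < r & forall a, A a -> r <= `|a|.
Proof.
rewrite -openC openE => /[apply] /nbhs_ballP[r r0 rA].
exists r => // a Aa; rewrite leNgt; apply/negP => ar.
by apply: (rA a) => //; rewrite -ball_normE /= sub0r normrN.
Qed.

Lemma dot_ge_closed_interior K C y : closed C -> ~ C 0 ->
  C `<=` dual_cone K -> interior K y ->
  exists2 d, 0 < d & forall c, C c -> d <= dot c y.
Proof.
move=> Ccl nC0 CK /interior_dot_ge_norm[e e0 ey].
have [r r0 Cr] := closed_norm_ge Ccl nC0.
exists (e * r) => [|c Cc]; first exact: mulr_gt0.
by apply: le_trans (ey c (CK c Cc)); rewrite ler_wpM2l ?Cr ?ltW.
Qed.

Lemma dot_le_compact C : compact C ->
  exists M, forall c y, C c -> dot c y <= M * `|y|.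
Proof.
move=> /compact_bounded[B [Breal CB]]; exists (m%:R * (`|B| + 1)) => c y Cc.
apply: le_trans (ler_norm _) _; apply: le_trans (normr_dot_le c y) _.
rewrite mulrA ler_wpM2r // ler_wpM2l // CB //.
by rewrite (le_lt_trans (real_ler_norm Breal)) // ltrDl.
Qed.

End Cones.

Section MaxC.
Variables (R : realType) (m : nat) (C : set 'rV[R]_m).
Hypotheses (C0 : C !=set0) (Cub : forall y, has_ubound [set dot c y | c in C]).

Lemma maxC_ge c y : C c -> dot c y <= Defs.maxC C y.
Proof. by move=> Cc; apply: ub_le_sup; [exact: Cub | exists c]. Qed.

Lemma maxC0 : Defs.maxC C 0 = 0.
Proof.
rewrite /Defs.maxC; have -> : [set dot c 0 | c in C] = [set 0].
  apply/seteqP; split => [_ [c _ <-]|_ ->]; first by rewrite dot0r.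
  by have [c Cc] := C0; exists c; rewrite ?dot0r.
exact: sup1.
Qed.

Lemma maxC_adherent y e : 0 < e -> exists2 c, C c & Defs.maxC C y - e < dot c y.
Proof.
move=> e0; have [c Cc] := C0.
have hs : has_sup [set dot c y | c in C] by split; [exists (dot c y), c | exact: Cub].
by have [_ [c' Cc' <-]] := sup_adherent e0 hs; exists c'.
Qed.

End MaxC.

Lemma strongly_Kconvex_segment (R : realType) n m (K : set 'rV[R]_m)
    (G : 'rV[R]_n -> 'rV[R]_m) mu c x z t :
  strongly_Kconvex K G mu -> dual_cone K c -> 0 <= t <= 1 ->
  2^-1 * (t * (1 - t)) * enorm (x - z) ^+ 2 * dot c mu <=
    t * dot c (G x) + (1 - t) * dot c (G z) - dot c (G (z + t *: (x - z))).
Proof.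
move=> Gsc Kc /andP[t0 t1]; set w := z + t *: (x - z).
have xw : x - w = (1 - t) *: (x - z).
  by rewrite /w scalerBl scale1r opprD addrA addrAC.
have zw : z - w = (- t) *: (x - z) by rewrite /w opprD addrA subrr add0r scaleNr.
have := Kle_dot Kc (Gsc w x); have := Kle_dot Kc (Gsc w z).
rewrite xw zw !linearZ /= !enormZ !exprMn !real_normK ?num_real //.
rewrite !dotDr !dotNr !dotZr.
set L := dot c _; set E := enorm _ ^+ 2; set M := dot c mu => Sz Sx.
have t1' : 0 <= 1 - t by rewrite subr_ge0.
have := ler_wpM2l t0 Sx; have := ler_wpM2l t1' Sz.
lra.
Qed.

Lemma ler_of_forall_shrink (R : realFieldType) (D a : R) : 0 <= D ->
  (forall t eta, 0 < t -> t < 1 -> 0 < eta -> (1 - t) * D <= a + eta) -> D <= a.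
Proof.
move=> D0 Dle; apply/ler_addgt0Pr => e e0.
have De : 0 < D + e by rewrite ltr_wpDl.
pose t := e / (2 * (D + e)).
have t0 : 0 < t by rewrite divr_gt0 ?mulr_gt0.
have t1 : t < 1 by rewrite ltr_pdivrMr ?mulr_gt0 // mul1r; lra.
have tD : t * D <= e / 2.
  rewrite mulrAC ler_pdivrMr ?mulr_gt0 //.
  have -> : e / 2 * (2 * (D + e)) = e * (D + e) by field.
  by rewrite ler_wpM2l ?ltW //; lra.
have := Dle t (e / 2) t0 t1 (divr_gt0 e0 (ltr0n _ 2)); lra.
Qed.

Section Surrogate.
Variables (R : realType) (n m : nat) (K C : set 'rV[R]_m) (l mu : 'rV[R]_m).
Variables (F G : 'rV[R]_n -> 'rV[R]_m) (xk : 'rV[R]_n).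
Hypotheses (CK : C `<=` dual_cone K) (C0 : C !=set0).
Hypothesis Cub : forall y, has_ubound [set dot c y | c in C].
Hypothesis SG : surrogate K C l mu F xk G.

Lemma surrogate_center : G xk = 0.
Proof. by have [_ [_ [_ [_ [/eqP]]]]] := SG; rewrite subrK => /eqP. Qed.

Lemma surrogate_descent z c : is_argmin_step C G z -> C c ->
  dot c (F z) <= dot c (F xk).
Proof.
move=> zmin Cc; have [_ [_ [Fz _]]] := SG.
have := Kle_dot (CK Cc) (Fz z zmin); rewrite dotBr.
have := le_trans (maxC_ge Cub (G z) Cc) (zmin xk).
rewrite surrogate_center maxC0 //; lra.
Qed.

Lemma surrogate_gap z x c : is_argmin_step C G z -> dual_cone K c ->
    dot c (F x) <= dot c (F z) ->
  dot c (G x) - dot c (G z) <= 2^-1 * enorm (x - xk) ^+ 2 * dot c l.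
Proof.
move=> zmin Kc Fxz; have [_ [_ [Fz [Hsm [H0 dH0]]]]] := SG.
have := Kle_dot Kc (Hsm xk x); rewrite H0 dH0 subr0 add0r dotZr !dotDr dotNr.
have := Kle_dot Kc (Fz z zmin); rewrite dotBr; lra.
Qed.

Variables (Q d : R).
Hypotheses (d0 : 0 < d) (Cmu : forall c, C c -> d <= dot c mu).
Hypothesis ClQ : forall c, C c -> dot c l <= Q * dot c mu.

Lemma surrogate_contraction z y : is_argmin_step C G z ->
    (forall c, C c -> dot c (F y) <= dot c (F z)) ->
  enorm (z - y) ^+ 2 <= Q * enorm (xk - y) ^+ 2.
Proof.
move=> zmin Fyz; apply: ler_of_forall_shrink => [|t eta t0 t1 eta0].
  by rewrite exprn_ge0 ?enorm_ge0.
have [_ [Gsc _]] := SG.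
(* Compare the optimal value at z with the value at w, read off by a
   near-maximiser c of <., G w>; the slack vanishes as eta -> 0 and t -> 0. *)
pose w := z + t *: (y - z).
have eps0 : 0 < eta * t * d / 2 by rewrite !(mulr_gt0, divr_gt0).
have [c Cc cw] := maxC_adherent C0 Cub (G w) eps0.
have t01 : 0 <= t <= 1 by rewrite !ltW.
have := strongly_Kconvex_segment y z Gsc (CK Cc) t01.
rewrite -/w (enorm_distC y z) => segment.
have opt := le_trans (maxC_ge Cub (G z) Cc) (zmin w).
have := surrogate_gap zmin (CK Cc) (Fyz c Cc); rewrite (enorm_distC y xk) => gap.
set E := enorm (z - y) ^+ 2 in segment *; set E0 := enorm (xk - y) ^+ 2 in gap *.
have E00 : 0 <= E0 by rewrite exprn_ge0 ?enorm_ge0.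
have dm0 : 0 < dot c mu := lt_le_trans d0 (Cmu Cc).
have lQ := ler_wpM2l (divr_ge0 (mulr_ge0 (ltW t0) E00) (ler0n _ 2)) (ClQ Cc).
have md := ler_wpM2l (divr_ge0 (mulr_ge0 (ltW eta0) (ltW t0)) (ler0n _ 2)) (Cmu Cc).
have tgap := ler_wpM2l (ltW t0) gap.
have key : t * dot c mu / 2 * ((1 - t) * E) <= t * dot c mu / 2 * (Q * E0 + eta).
  by lra.
by rewrite ler_pM2l in key; rewrite ?divr_gt0 ?mulr_gt0.
Qed.

End Surrogate.

Section RatioSup.
Variables (R : realType) (T : Type) (A : set T) (f g : T -> R) (d M : R).
Hypotheses (A0 : A !=set0) (d0 : 0 < d).
Hypothesis fg : forall a, A a -> [/\ 0 <= f a, d <= g a - f a & g a <= M].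

Let g_gt0 a : A a -> 0 < g a.
Proof.
move=> /fg[f0 dfg _]; apply: lt_le_trans d0 (le_trans dfg _).
by rewrite lerBlDr lerDl.
Qed.

Let M_gt0 : 0 < M.
Proof. by have [a Aa] := A0; have [_ _ gM] := fg Aa; exact: lt_le_trans (g_gt0 Aa) gM. Qed.

Lemma ratio_le_1_sub a : A a -> f a / g a <= 1 - d / M.
Proof.
move=> Aa; have [_ dfg gM] := fg Aa; have g0 := g_gt0 Aa.
rewrite ler_pdivrMr // mulrBl mul1r lerBrDl -lerBrDr.
by apply: le_trans dfg; rewrite mulrAC ler_pdivrMr // ler_pM2l.
Qed.

Let ratio_ub : has_ubound [set f a / g a | a in A].
Proof. by exists (1 - d / M) => _ [a Aa <-]; exact: ratio_le_1_sub. Qed.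

Lemma sup_ratio_ge0 : 0 <= sup [set f a / g a | a in A].
Proof.
have [a Aa] := A0; have [f0 _ _] := fg Aa.
apply: le_trans (ub_le_sup ratio_ub (ex_intro2 _ _ a Aa erefl)).
exact: divr_ge0 f0 (ltW (g_gt0 Aa)).
Qed.

Lemma sup_ratio_lt1 : sup [set f a / g a | a in A] < 1.
Proof.
apply: (@le_lt_trans _ _ (1 - d / M)); last by rewrite ltrBlDr ltrDl divr_gt0.
apply: ge_sup => [|_ [a Aa <-]]; last exact: ratio_le_1_sub.
by have [a Aa] := A0; exists (f a / g a), a.
Qed.

Lemma ler_sup_ratio a : A a -> f a <= sup [set f a / g a | a in A] * g a.
Proof.
move=> Aa; rewrite -ler_pdivrMr ?g_gt0 //.
exact: (ub_le_sup ratio_ub (ex_intro2 _ _ a Aa erefl)).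
Qed.

End RatioSup.

Section GeometricBound.
Variables (R : realType) (V : normedModType R).

Lemma cvg_geometric_bound (u : nat -> V) y q M : 0 <= q < 1 ->
  (forall k, `|u k - y| <= q ^+ k * M) -> u @ \oo --> y.
Proof.
move=> /andP[q0 q1] uy; have qM : (fun k => q ^+ k * M) @ \oo --> 0.
  rewrite -(mul0r M); apply: cvgM; last exact: cvg_cst.
  by apply: cvg_expr; rewrite ger0_norm.
apply/cvgrPdist_le => e e0; move/cvgrPdist_le : qM => /(_ e e0).
apply: filterS => k; rewrite sub0r normrN distrC; apply: le_trans.
exact: le_trans (uy k) (ler_norm _).
Qed.

Lemma cauchy_geometric_bound (u : nat -> V) q s :
    0 <= q < 1 -> 0 <= s ->
    (forall k j, (k <= j)%N -> `|u k - u j| <= q ^+ k * (s * `|u 0 - u j|)) ->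
  cauchy (u @ \oo).
Proof.
move=> /andP[q0 q1] s0 uq.
have qs : (fun k => q ^+ k * s) @ \oo --> 0.
  rewrite -(mul0r s); apply: cvgM; last exact: cvg_cst.
  by apply: cvg_expr; rewrite ger0_norm.
have half0 : 0 < 2^-1 :> R by rewrite invr_gt0.
have [p /= qp] := filter_ex (cvgr0_norm_le _ qs _ half0).
have qp0 : 0 <= q ^+ p by rewrite exprn_ge0.
rewrite ger0_norm ?mulr_ge0 // in qp.
pose E := 2 * `|u 0 - u p|.
have E0 : 0 <= E by rewrite mulr_ge0.
have bound j : (p <= j)%N -> `|u 0 - u j| <= E.
  move=> pj; have := ler_normD (u 0 - u p) (u p - u j).
  rewrite addrA subrK => /le_trans /(_ (lerD (lexx _) (uq _ _ pj))).
  have := ler_wpM2r (normr_ge0 (u 0 - u j)) qp; rewrite /E mulrA; lra.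
apply: cauchy_exP => e e0.
have eE : 0 < e / (E + 1) by rewrite divr_gt0 // ltr_wpDl.
have [k [/= qk pk]] := filter_ex (filterI (cvgr0_norm_lt _ qs _ eE) (nbhs_infty_ge p)).
exists (u k); apply: filterS (nbhs_infty_ge k) => j kj /=.
rewrite -ball_normE /=; apply: le_lt_trans (uq _ _ kj) _.
rewrite ger0_norm ?mulr_ge0 ?exprn_ge0 // in qk.
rewrite mulrA; apply: le_lt_trans (ler_wpM2l _ (bound j (leq_trans pk kj))) _.
  by rewrite mulr_ge0 ?exprn_ge0.
apply: le_lt_trans (ler_wpM2r E0 (ltW qk)) _.
by rewrite mulrAC ltr_pdivrMr ?ltr_wpDl // ltr_pM2l // ltrDl.
Qed.

End GeometricBound.

Section Iterates.
Variables (R : realType) (n m : nat) (K C : set 'rV[R]_m) (l mu : 'rV[R]_m).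
Variables (F : 'rV[R]_n -> 'rV[R]_m) (x : nat -> 'rV[R]_n).
Variable G : nat -> 'rV[R]_n -> 'rV[R]_m.
Hypotheses (CK : C `<=` dual_cone K) (C0 : C !=set0).
Hypothesis Cub : forall y, has_ubound [set dot c y | c in C].
Hypothesis alg : alg1_seq K C l mu F x G.

Lemma alg1_descent c i j : C c -> (i <= j)%N -> dot c (F (x j)) <= dot c (F (x i)).
Proof.
move=> Cc /subnKC <-; elim: (j - i)%N => [|k IH]; first by rewrite addn0.
have [SG xmin] := alg (i + k)%N.
by rewrite addnS; apply: le_trans (surrogate_descent CK C0 Cub SG xmin Cc) IH.
Qed.

Variables (Q d : R).
Hypotheses (d0 : 0 < d) (Cmu : forall c, C c -> d <= dot c mu).
Hypothesis ClQ : forall c, C c -> dot c l <= Q * dot c mu.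
Hypotheses (Q0 : 0 <= Q) (Q1 : Q < 1).

Lemma alg1_contraction y k :
    (forall c, C c -> dot c (F y) <= dot c (F (x k.+1))) ->
  enorm (x k.+1 - y) <= Num.sqrt Q * enorm (x k - y).
Proof.
move=> Fy; have [SG xmin] := alg k.
have contr := surrogate_contraction CK C0 Cub SG d0 Cmu ClQ xmin Fy.
rewrite -(@ler_pXn2r _ 2) ?nnegrE ?mulr_ge0 ?sqrtr_ge0 ?enorm_ge0 //.
by rewrite exprMn (sqr_sqrtr Q0).
Qed.

Lemma alg1_geometric y k :
    (forall i c, (i <= k)%N -> C c -> dot c (F y) <= dot c (F (x i))) ->
  enorm (x k - y) <= Num.sqrt Q ^+ k * enorm (x 0 - y).
Proof.
elim: k => [|k IH] Fy; first by rewrite expr0 mul1r.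
apply: le_trans (alg1_contraction (Fy k.+1 ^~ (leqnn _))) _.
rewrite exprS -mulrA ler_wpM2l ?sqrtr_ge0 // IH // => i c ik.
exact/Fy/ltnW.
Qed.

Let sqrtQ01 : 0 <= Num.sqrt Q < 1.
Proof. by rewrite sqrtr_ge0 /= -sqrtr1 ltr_sqrt. Qed.

Lemma alg1_cvg : cvg (x @ \oo).
Proof.
apply/cauchy_cvgP/(cauchy_geometric_bound sqrtQ01 (sqrtr_ge0 n%:R)) => k j kj.
apply: le_trans (normr_le_enorm _) (le_trans (alg1_geometric _) _).
  by move=> i c ik Cc; exact: alg1_descent (leq_trans ik kj).
by apply: ler_wpM2l; [rewrite exprn_ge0 ?sqrtr_ge0 | exact: enorm_le_normr].
Qed.

Lemma alg1_cvg_to y : (forall k c, C c -> dot c (F y) <= dot c (F (x k))) ->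
  x @ \oo --> y.
Proof.
move=> Fy; apply: (cvg_geometric_bound sqrtQ01) => k.
apply: le_trans (normr_le_enorm _) (alg1_geometric _) => i c _; exact: Fy.
Qed.

Hypothesis dF : differentiable_all F.

Lemma alg1_lim_below c k : C c -> dot c (F (lim (x @ \oo))) <= dot c (F (x k)).
Proof.
move=> Cc.
have Fx : (F \o x) @ \oo --> F (lim (x @ \oo)) :=
  cvg_comp _ _ alg1_cvg (differentiable_continuous (dF _)).
have dFx := cvg_comp _ _ Fx (@dot_continuous _ _ c (F (lim (x @ \oo)))).
apply: (cvgr_to_le dFx).
by apply: filterS (nbhs_infty_ge k) => j kj; exact: alg1_descent.
Qed.

End Iterates.

Theorem theorem3 (R : realType) (n m : nat)
  (K C : set 'rV[R]_m) (F : 'rV[R]_n -> 'rV[R]_m) (l mu : 'rV[R]_m)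
  (x : nat -> 'rV[R]_n) (G : nat -> 'rV[R]_n -> 'rV[R]_m) :
  proper_cone K ->
  compact C -> convex_set' C -> ~ C 0 -> cone_of C = dual_cone K ->
  differentiable_all F ->
  assumption_Aii K C l mu F ->
  (exists muF, interior K muF /\ strongly_Kconvex K F muF) ->
  K l -> interior K mu -> Klt K l mu ->
  alg1_seq K C l mu F x G ->
  (forall k, x k.+1 != x k) ->
  exists xs : 'rV[R]_n,
    [/\ x @ \oo --> xs,
        efficient K F xs
      & forall k, enorm (x k.+1 - xs) <=
          Num.sqrt (sup [set dot c l / dot c mu | c in C]) * enorm (x k - xs)].
Proof.
move=> _ cC _ nC0 coneC dF _ _ Kl _ lmu alg _.
have CK := cone_of_dual_sub coneC; have C0 := cone_of_dual_neq0 coneC.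
have [M CM] := dot_le_compact cC.
have Cub y : has_ubound [set dot c y | c in C].
  by exists (M * `|y|) => _ [c Cc <-]; exact: CM.
have Ccl := compact_closed (@norm_hausdorff _ _) cC.
have [d d0 Cd] := dot_ge_closed_interior Ccl nC0 CK lmu.
have lmuM c : C c -> [/\ 0 <= dot c l, d <= dot c mu - dot c l & dot c mu <= M * `|mu|].
  by move=> Cc; rewrite -dotBr; split; [exact: CK | exact: Cd | exact: CM].
have Cmu c : C c -> d <= dot c mu.
  by move=> /lmuM[l0 dlm _]; apply: le_trans dlm _; rewrite lerBlDr lerDl.
have ClQ := ler_sup_ratio C0 d0 lmuM.
have Q0 := sup_ratio_ge0 C0 d0 lmuM; have Q1 := sup_ratio_lt1 C0 d0 lmuM.
have below := alg1_lim_below CK C0 Cub alg d0 Cmu ClQ Q0 Q1 dF.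
exists (lim (x @ \oo)); split => [|y Fy|k].
- exact: (alg1_cvg CK C0 Cub alg d0 Cmu ClQ Q0 Q1).
- have xy : x @ \oo --> y.
    apply: (alg1_cvg_to CK C0 Cub alg d0 Cmu ClQ Q0 Q1) => k c Cc.
    exact: le_trans (Kle_dot (CK c Cc) Fy) (below c k Cc).
  by rewrite (cvg_lim _ xy).
- by apply: (alg1_contraction CK C0 Cub alg d0 Cmu ClQ Q0) => c Cc; exact: below.
Qed.
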